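(* Let $(x,y,z)\in E$ be a $C$ or $D$ representation class that is not a $\mathrm{Pin}(2)$ representation class. Then there exists $\gamma\in\Gamma$ such that $\gamma(x,y,z)$ is $S$-equivalent to one of the triples $$(\sqrt2,1,\sqrt2),\ (1,1,1),\ (-2s,2s,2s),\ (-2s,-2s,1),\ (2r,-2r,-2r),\ (2r,1,2r),\ (1,2r,1),\ (1,2s,-1),\ (1,2r,2s),$$ where $r=\frac{\sqrt5+1}{4}$ and $s=\frac{\sqrt5-1}{4}$.
   Context: $M$ is a torus with one boundary component; $\pi_1(M)$ is free on $X,Y$. $E=\operatorname{Hom}(\pi_1(M),\mathrm{SU}(2))/\mathrm{SU}(2)$ is identified via global coordinates $[\sigma]\mapsto(\operatorname{tr}\sigma(X),\operatorname{tr}\sigma(Y),\operatorname{tr}\sigma(XY))$ with $\{(x,y,z)\in[-2,2]^3:-2\le x^2+y^2+z^2-xyz-2\le2\}$. $\Gamma$ (mapping class group of $M$ fixing $\partial M$) acts on $E$, generated by $\tau_X(x,y,z)=(x,z,xz-y)$ and $\tau_Y(x,y,z)=(z,y,yz-x)$. Let $p:\mathrm{SU}(2)\to\mathrm{SO}(3)$ be the double cover; $C=p^{-1}(\text{rotation group of the cube})$ and $D=p^{-1}(\text{rotation group of the regular dodecahedron})$. In the quaternionic model ($1,\mathrm{i},\mathrm{j},\mathrm{k}$ = $\begin{pmatrix}1&0\\0&1\end{pmatrix},\begin{pmatrix}i&0\\0&-i\end{pmatrix},\begin{pmatrix}0&1\\-1&0\end{pmatrix},\begin{pmatrix}0&i\\i&0\end{pmatrix}$),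 $\mathrm{Pin}(2)=p^{-1}(\mathrm{O}(2))=\{\cos\theta+\sin\theta\,\mathrm{j}\}\cup\{\cos\theta\,\mathrm{k}+\sin\theta\,\mathrm{i}\}$. For a subgroup $G\subset\mathrm{SU}(2)$, a point of $E$ is a $G$ representation class if some representative takes values in $G$ (equivalently, in a conjugate of $G$). Two triples are $S$-equivalent if one is obtained from the other by a permutation of coordinates combined with changing the signs of an even number of coordinates. *)

From Stdlib Require Import Reals List.
Import ListNotations.
Open Scope R_scope.

(* Quaternions a + b i + c j + d k.  In the matrix model of the paper,
   a + b i + c j + d k = [[a + b i, c + d i], [-c + d i, a - b i]], so
   SU(2) = unit quaternions and the trace is 2a. *)
Record quat := Q { q0 : R; q1 : R; q2 : R; q3 : R }.

Definition qmul (p q : quat) : quat :=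
  let '(Q a1 b1 c1 d1) := p in
  let '(Q a2 b2 c2 d2) := q in
  Q (a1*a2 - b1*b2 - c1*c2 - d1*d2)
    (a1*b2 + b1*a2 + c1*d2 - d1*c2)
    (a1*c2 - b1*d2 + c1*a2 + d1*b2)
    (a1*d2 + b1*c2 - c1*b2 + d1*a2).

Definition qconj (q : quat) : quat := Q (q0 q) (- q1 q) (- q2 q) (- q3 q).

Definition inSU2 (q : quat) : Prop :=
  q0 q ^ 2 + q1 q ^ 2 + q2 q ^ 2 + q3 q ^ 2 = 1.

Definition qtr (q : quat) : R := 2 * q0 q.

Definition rot (q : quat) (v : R * R * R) : R * R * R :=
  let '(v1, v2, v3) := v in
  let w := qmul (qmul q (Q 0 v1 v2 v3)) (qconj q) in
  (q1 w, q2 w, q3 w).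

Definition cube_vertex (v : R * R * R) : Prop :=
  let '(v1, v2, v3) := v in Rabs v1 = 1 /\ Rabs v2 = 1 /\ Rabs v3 = 1.

Definition phi : R := (1 + sqrt 5) / 2.

Definition dodec_vertex (v : R * R * R) : Prop :=
  let '(v1, v2, v3) := v in
     (Rabs v1 = 1 /\ Rabs v2 = 1 /\ Rabs v3 = 1)
  \/ (v1 = 0 /\ Rabs v2 = / phi /\ Rabs v3 = phi)
  \/ (Rabs v1 = / phi /\ Rabs v2 = phi /\ v3 = 0)
  \/ (Rabs v1 = phi /\ v2 = 0 /\ Rabs v3 = / phi).

Definition Cgrp (q : quat) : Prop :=
  inSU2 q /\ forall v, cube_vertex v -> cube_vertex (rot q v).

Definition Dgrp (q : quat) : Prop :=
  inSU2 q /\ forall v, dodec_vertex v -> dodec_vertex (rot q v).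

Definition Pin2 (q : quat) : Prop :=
  exists t : R, q = Q (cos t) 0 (sin t) 0 \/ q = Q 0 (sin t) 0 (cos t).

Definition in_E (t : R * R * R) : Prop :=
  let '(x, y, z) := t in
  -2 <= x <= 2 /\ -2 <= y <= 2 /\ -2 <= z <= 2 /\
  -2 <= x^2 + y^2 + z^2 - x*y*z - 2 <= 2.

(* (x,y,z) is a G representation class: some representation
   sigma : <X,Y> -> SU(2) with values in G has
   (tr sigma(X), tr sigma(Y), tr sigma(XY)) = (x,y,z). *)
Definition rep_class (G : quat -> Prop) (t : R * R * R) : Prop :=
  let '(x, y, z) := t in
  exists A B : quat, G A /\ G B /\
    qtr A = x /\ qtr B = y /\ qtr (qmul A B) = z.

Inductive gen := tauX | tauXinv | tauY | tauYinv.

Definition act (g : gen) (t : R * R * R) : R * R * R :=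
  let '(x, y, z) := t in
  match g with
  | tauX => (x, z, x*z - y)
  | tauXinv => (x, x*y - z, y)
  | tauY => (z, y, y*z - x)
  | tauYinv => (x*y - z, y, x)
  end.

Definition act_word (w : list gen) (t : R * R * R) : R * R * R :=
  fold_right act t w.

Inductive perm3 := p123 | p132 | p213 | p231 | p312 | p321.

Definition permute (s : perm3) (t : R * R * R) : R * R * R :=
  let '(x, y, z) := t in
  match s with
  | p123 => (x, y, z) | p132 => (x, z, y) | p213 => (y, x, z)
  | p231 => (y, z, x) | p312 => (z, x, y) | p321 => (z, y, x)
  end.

Definition S_equiv (t u : R * R * R) : Prop :=
  exists (s : perm3) (e1 e2 e3 : R),
    (e1 = 1 \/ e1 = -1) /\ (e2 = 1 \/ e2 = -1) /\ (e3 = 1 \/ e3 = -1) /\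
    e1 * e2 * e3 = 1 /\
    let '(a, b, c) := permute s t in u = (e1 * a, e2 * b, e3 * c).

Definition r5 : R := (sqrt 5 + 1) / 4.
Definition s5 : R := (sqrt 5 - 1) / 4.

Definition special_triples : list (R * R * R) :=
  [ (sqrt 2, 1, sqrt 2); (1, 1, 1); (-2*s5, 2*s5, 2*s5); (-2*s5, -2*s5, 1);
    (2*r5, -2*r5, -2*r5); (2*r5, 1, 2*r5); (1, 2*r5, 1); (1, 2*s5, -1);
    (1, 2*r5, 2*s5) ]%list.

(* The trace of p(q) is 4 q0^2 - 1 = tr(q)^2 - 1, and p(q) is the linear map determined
   by the images U, V, W of three cube vertices, which are again vertices.  Enumerating
   the triples (U, V, W) in exact arithmetic in Q(sqrt 2), resp. Q(sqrt 5), shows that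
   every element of C has trace in T_C = {0, +-1, +-sqrt 2, +-2} and every element of D
   in T_D = {0, +-1, +-phi, +-1/phi, +-2}.  Hence a C or D class lies in T^3, and so does
   each of its images under tau_X, tau_Y and (x, y, z) |-> (y, x, z), which replace
   (sigma X, sigma Y) by (A, AB), (AB, B) and (B, A).  Running through the finitely many
   points of T^3, each one either leaves T^3 after at most four such moves, or is a
   Pin(2) class (x^2 + y^2 + z^2 - x y z = 4, realised in the circle subgroup, or two
   vanishing coordinates), or is sent by at most one generator of Gamma or its inverse
   to a triple S-equivalent to one of the listed ones. *)

From Pilot Require Import Defs.
From Stdlib Require Import Reals List QArith Qreals Lra Lia Psatz.
Import ListNotations.
Open Scope R_scope.

(** * Exact arithmetic in Q(sqrt d) *)

Lemma Q2R_Qred (q : Q) : Q2R (Qred q) = Q2R q.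
Proof. apply Qeq_eqR, Qred_correct. Qed.

Lemma Q2R_inject_Z (z : Z) : Q2R (inject_Z z) = IZR z.
Proof. unfold Q2R; simpl; field. Qed.

Lemma Q2R_half : Q2R (1 # 2) = / 2.
Proof. unfold Q2R; simpl; field. Qed.

(* [QF a b] stands for a + b sqrt d, the radicand d being fixed by the evaluation
   [qf_val d]. *)
Record qf := QF { qf_rat : Q; qf_irr : Q }.

Definition qf_const (q : Q) : qf := QF q 0.
Definition qf_int (z : Z) : qf := qf_const (inject_Z z).
Definition qf_add (u v : qf) : qf :=
  QF (Qred (qf_rat u + qf_rat v)) (Qred (qf_irr u + qf_irr v)).
Definition qf_opp (u : qf) : qf := QF (- qf_rat u) (- qf_irr u).
Definition qf_sub (u v : qf) : qf := qf_add u (qf_opp v).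
Definition qf_eqb (u v : qf) : bool :=
  Qeq_bool (qf_rat u) (qf_rat v) && Qeq_bool (qf_irr u) (qf_irr v).

Section QuadraticField.

Variable d : Z.

Definition qf_mul (u v : qf) : qf :=
  QF (Qred (qf_rat u * qf_rat v + inject_Z d * qf_irr u * qf_irr v))
     (Qred (qf_rat u * qf_irr v + qf_irr u * qf_rat v)).

Definition qf_val (u : qf) : R := Q2R (qf_rat u) + Q2R (qf_irr u) * sqrt (IZR d).

(* A nonzero norm a^2 - d b^2 certifies a + b sqrt d <> 0. *)
Definition qf_neqb (u v : qf) : bool :=
  let w := qf_sub u v in
  negb (Qeq_bool (qf_rat w * qf_rat w - inject_Z d * qf_irr w * qf_irr w) 0).

Lemma qf_val_const q : qf_val (qf_const q) = Q2R q.
Proof. unfold qf_val, qf_const; simpl; unfold Q2R at 2; simpl; ring. Qed.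

Lemma qf_val_int z : qf_val (qf_int z) = IZR z.
Proof. unfold qf_int; rewrite qf_val_const; apply Q2R_inject_Z. Qed.

Lemma qf_val_add u v : qf_val (qf_add u v) = qf_val u + qf_val v.
Proof. unfold qf_val, qf_add; cbn [qf_rat qf_irr]; rewrite !Q2R_Qred, !Q2R_plus; ring. Qed.

Lemma qf_val_opp u : qf_val (qf_opp u) = - qf_val u.
Proof. unfold qf_val, qf_opp; cbn [qf_rat qf_irr]; rewrite !Q2R_opp; ring. Qed.

Lemma qf_val_sub u v : qf_val (qf_sub u v) = qf_val u - qf_val v.
Proof. unfold qf_sub; rewrite qf_val_add, qf_val_opp; ring. Qed.

Lemma qf_eqb_val u v : qf_eqb u v = true -> qf_val u = qf_val v.
Proof.
  unfold qf_eqb, qf_val; rewrite andb_true_iff, !Qeq_bool_iff.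
  intros [Hr Hi]; rewrite (Qeq_eqR _ _ Hr), (Qeq_eqR _ _ Hi); reflexivity.
Qed.

Hypothesis d_ge0 : (0 <= d)%Z.

Lemma sqrt_d_sqr : sqrt (IZR d) * sqrt (IZR d) = IZR d.
Proof. apply sqrt_sqrt, IZR_le, d_ge0. Qed.

Lemma qf_val_mul u v : qf_val (qf_mul u v) = qf_val u * qf_val v.
Proof.
  unfold qf_val, qf_mul; cbn [qf_rat qf_irr].
  rewrite !Q2R_Qred, !Q2R_plus, !Q2R_mult, Q2R_inject_Z.
  pose proof sqrt_d_sqr as Hs; set (s := sqrt (IZR d)) in *; rewrite <- Hs; ring.
Qed.

Lemma qf_neqb_val u v : qf_neqb u v = true -> qf_val u <> qf_val v.
Proof.
  unfold qf_neqb; set (w := qf_sub u v); intros Hnorm Huv.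
  assert (Hw : Q2R (qf_rat w) = - Q2R (qf_irr w) * sqrt (IZR d)).
  { assert (qf_val w = 0) by (unfold w; rewrite qf_val_sub, Huv; ring).
    unfold qf_val in *; lra. }
  assert (Hzero : Q2R (qf_rat w * qf_rat w - inject_Z d * qf_irr w * qf_irr w) = Q2R 0).
  { rewrite Q2R_minus, !Q2R_mult, Q2R_inject_Z, Hw.
    replace (Q2R 0) with 0 by (unfold Q2R; simpl; ring).
    pose proof sqrt_d_sqr as Hs; set (s := sqrt (IZR d)) in *; rewrite <- Hs; ring. }
  apply eqR_Qeq, Qeq_bool_iff in Hzero; rewrite Hzero in Hnorm; discriminate.
Qed.

End QuadraticField.

Notation qf3 := (qf * qf * qf)%type.

Definition qf3_val (d : Z) (u : qf3) : R * R * R :=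
  let '(a, b, c) := u in (qf_val d a, qf_val d b, qf_val d c).

Definition qf3_eqb (u v : qf3) : bool :=
  let '(u1, u2, u3) := u in let '(v1, v2, v3) := v in
  qf_eqb u1 v1 && qf_eqb u2 v2 && qf_eqb u3 v3.

Definition qf3_neqb (d : Z) (u v : qf3) : bool :=
  let '(u1, u2, u3) := u in let '(v1, v2, v3) := v in
  qf_neqb d u1 v1 || qf_neqb d u2 v2 || qf_neqb d u3 v3.

Lemma qf3_eqb_val d u v : qf3_eqb u v = true -> qf3_val d u = qf3_val d v.
Proof.
  destruct u as [[u1 u2] u3], v as [[v1 v2] v3]; simpl; rewrite !andb_true_iff.
  intros [[H1 H2] H3].
  rewrite (qf_eqb_val d _ _ H1), (qf_eqb_val d _ _ H2), (qf_eqb_val d _ _ H3); reflexivity.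
Qed.

Lemma qf3_neqb_val d (Hd : (0 <= d)%Z) u v :
  qf3_neqb d u v = true -> qf3_val d u <> qf3_val d v.
Proof.
  destruct u as [[u1 u2] u3], v as [[v1 v2] v3]; simpl; rewrite !orb_true_iff.
  intros H E; injection E; intros E3 E2 E1.
  destruct H as [[H | H] | H]; eapply qf_neqb_val; eassumption.
Qed.

(** * Traces of C and D *)

Definition cube_v0 : R * R * R := (1, 1, 1).
Definition cube_v1 : R * R * R := (1, -1, -1).
Definition cube_v2 : R * R * R := (-1, 1, -1).

(* The linear map sending cube_v0, cube_v1, cube_v2 to U, V, W; it sends the
   standard basis to (U + V)/2, (U + W)/2 and -(V + W)/2. *)
Definition frame_map (p U V W : R * R * R) : R * R * R :=
  let '(p1, p2, p3) := p in let '(u1, u2, u3) := U in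
  let '(v1, v2, v3) := V in let '(w1, w2, w3) := W in
  (p1 * ((u1 + v1) / 2) + p2 * ((u1 + w1) / 2) - p3 * ((v1 + w1) / 2),
   p1 * ((u2 + v2) / 2) + p2 * ((u2 + w2) / 2) - p3 * ((v2 + w2) / 2),
   p1 * ((u3 + v3) / 2) + p2 * ((u3 + w3) / 2) - p3 * ((v3 + w3) / 2)).

Definition frame_trace (U V W : R * R * R) : R :=
  let '(u1, u2, u3) := U in let '(v1, v2, v3) := V in let '(w1, w2, w3) := W in
  (u1 + v1) / 2 + (u2 + w2) / 2 - (v3 + w3) / 2.

Definition det3 (U V W : R * R * R) : R :=
  let '(u1, u2, u3) := U in let '(v1, v2, v3) := V in let '(w1, w2, w3) := W in
  u1 * (v2 * w3 - v3 * w2) - v1 * (u2 * w3 - u3 * w2) + w1 * (u2 * v3 - u3 * v2).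

Lemma rot_frame_map q p :
  rot q p = frame_map p (rot q cube_v0) (rot q cube_v1) (rot q cube_v2).
Proof. destruct q, p as [[x y] z]; simpl; f_equal; [f_equal |]; field. Qed.

Lemma frame_trace_rot q : inSU2 q ->
  frame_trace (rot q cube_v0) (rot q cube_v1) (rot q cube_v2) = 4 * q0 q ^ 2 - 1.
Proof.
  destruct q as [a b c d]; unfold inSU2; cbn [q0 q1 q2 q3]; intro Hq; simpl.
  transitivity (4 * a ^ 2 - (a ^ 2 + b ^ 2 + c ^ 2 + d ^ 2)); [field | rewrite Hq; ring].
Qed.

Lemma det3_rot q : inSU2 q -> det3 (rot q cube_v0) (rot q cube_v1) (rot q cube_v2) = 4.
Proof.
  destruct q as [a b c d]; unfold inSU2; cbn [q0 q1 q2 q3]; intro Hq; simpl.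
  transitivity (4 * (a ^ 2 + b ^ 2 + c ^ 2 + d ^ 2) ^ 3); [ring | rewrite Hq; ring].
Qed.

Section QFGeometry.

Variable d : Z.

Local Infix "+" := qf_add.
Local Infix "-" := qf_sub.
Local Infix "*" := (qf_mul d).
Local Notation half := (qf_const (1 # 2)).

Definition qf_frame_map (p U V W : qf3) : qf3 :=
  let '(p1, p2, p3) := p in let '(u1, u2, u3) := U in
  let '(v1, v2, v3) := V in let '(w1, w2, w3) := W in
  (p1 * ((u1 + v1) * half) + p2 * ((u1 + w1) * half) - p3 * ((v1 + w1) * half),
   p1 * ((u2 + v2) * half) + p2 * ((u2 + w2) * half) - p3 * ((v2 + w2) * half),
   p1 * ((u3 + v3) * half) + p2 * ((u3 + w3) * half) - p3 * ((v3 + w3) * half)).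

Definition qf_frame_trace (U V W : qf3) : qf :=
  let '(u1, u2, u3) := U in let '(v1, v2, v3) := V in let '(w1, w2, w3) := W in
  (u1 + v1) * half + (u2 + w2) * half - (v3 + w3) * half.

Definition qf_det3 (U V W : qf3) : qf :=
  let '(u1, u2, u3) := U in let '(v1, v2, v3) := V in let '(w1, w2, w3) := W in
  u1 * (v2 * w3 - v3 * w2) - v1 * (u2 * w3 - u3 * w2) + w1 * (u2 * v3 - u3 * v2).

Hypothesis d_ge0 : (0 <= d)%Z.

Ltac qf_val_simpl :=
  repeat first [ rewrite qf_val_add | rewrite qf_val_sub | rewrite qf_val_const
               | rewrite Q2R_half | rewrite (qf_val_mul d d_ge0) ].

Lemma qf_frame_map_val p U V W :
  qf3_val d (qf_frame_map p U V W)
  = frame_map (qf3_val d p) (qf3_val d U) (qf3_val d V) (qf3_val d W).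
Proof.
  destruct p as [[? ?] ?], U as [[? ?] ?], V as [[? ?] ?], W as [[? ?] ?].
  simpl; qf_val_simpl; reflexivity.
Qed.

Lemma qf_frame_trace_val U V W :
  qf_val d (qf_frame_trace U V W) = frame_trace (qf3_val d U) (qf3_val d V) (qf3_val d W).
Proof.
  destruct U as [[? ?] ?], V as [[? ?] ?], W as [[? ?] ?].
  simpl; qf_val_simpl; field.
Qed.

Lemma qf_det3_val U V W :
  qf_val d (qf_det3 U V W) = det3 (qf3_val d U) (qf3_val d V) (qf3_val d W).
Proof.
  destruct U as [[? ?] ?], V as [[? ?] ?], W as [[? ?] ?].
  simpl; qf_val_simpl; reflexivity.
Qed.

End QFGeometry.

Definition pm (k : qf) : list qf := [k; qf_opp k].

Definition triple_codes (A B C : list qf) : list qf3 := list_prod (list_prod A B) C.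

Lemma in_map_pm d k v : In v (map (qf_val d) (pm k)) <-> Rabs v = Rabs (qf_val d k).
Proof.
  simpl; rewrite qf_val_opp; split.
  - intros [<- | [<- | []]]; [| rewrite Rabs_Ropp]; reflexivity.
  - intro Habs; apply Rsqr_eq_asb_1, Rsqr_eq in Habs; destruct Habs as [-> | ->]; auto.
Qed.

Lemma in_map_triple_codes d A B C v1 v2 v3 :
  In (v1, v2, v3) (map (qf3_val d) (triple_codes A B C))
  <-> In v1 (map (qf_val d) A) /\ In v2 (map (qf_val d) B) /\ In v3 (map (qf_val d) C).
Proof.
  rewrite !in_map_iff; split.
  - intros [[[a b] c] [E Habc]]; injection E; intros <- <- <-.
    unfold triple_codes in Habc; rewrite !in_prod_iff in Habc.
    destruct Habc as [[Ha Hb] Hc]; repeat split; eexists; split; eauto.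
  - intros [[a [<- Ha]] [[b [<- Hb]] [c [<- Hc]]]].
    exists (a, b, c); split; [reflexivity |].
    unfold triple_codes; rewrite !in_prod_iff; tauto.
Qed.

Lemma in_map_flat_map_pm d T x :
  (exists k, In k T /\ x * x = qf_val d k * qf_val d k) ->
  In x (map (qf_val d) (flat_map pm T)).
Proof.
  intros [k [Hk Hx]]; apply Rsqr_eq in Hx.
  apply in_map_iff; destruct Hx as [-> | ->].
  - exists k; split; [reflexivity | apply in_flat_map; exists k; simpl; auto].
  - exists (qf_opp k); split; [apply qf_val_opp | apply in_flat_map; exists k; simpl; auto].
Qed.

(* (U, V, W) passes if it is not the image of (cube_v0, cube_v1, cube_v2) under a rotation
   preserving L (the induced linear map has determinant <> 1 or sends a vertex off L),
   or if that map has trace t with 1 + t = k^2 for some k in T.  Short-circuits in the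
   checkers are written with [if] since [vm_compute] evaluates both arguments of [||]. *)
Definition trace_cert (d : Z) (L : list qf3) (T : list qf) : bool :=
  forallb (fun U => forallb (fun V => forallb (fun W =>
    if qf_neqb d (qf_det3 d U V W) (qf_int 4) then true
    else if existsb (fun k => qf_eqb (qf_add (qf_int 1) (qf_frame_trace d U V W)) (qf_mul d k k)) T
    then true
    else existsb (fun p => forallb (qf3_neqb d (qf_frame_map d p U V W)) L) L)
  L) L) L.

Lemma trace_cert_sound d L T (vertex : R * R * R -> Prop) :
  (0 <= d)%Z -> trace_cert d L T = true ->
  (forall v, vertex v <-> In v (map (qf3_val d) L)) ->
  vertex cube_v0 -> vertex cube_v1 -> vertex cube_v2 ->
  forall q, inSU2 q -> (forall v, vertex v -> vertex (rot q v)) ->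
  In (qtr q) (map (qf_val d) (flat_map pm T)).
Proof.
  intros Hd Hcert HL H0 H1 H2 q Hq Hrot.
  assert (Hcode : forall v, vertex v -> exists c, qf3_val d c = rot q v /\ In c L)
    by (intros v Hv; apply in_map_iff, HL, Hrot, Hv).
  destruct (Hcode _ H0) as [U [EU HU]], (Hcode _ H1) as [V [EV HV]],
    (Hcode _ H2) as [W [EW HW]].
  unfold trace_cert in Hcert.
  rewrite forallb_forall in Hcert; specialize (Hcert U HU); cbv beta in Hcert.
  rewrite forallb_forall in Hcert; specialize (Hcert V HV); cbv beta in Hcert.
  rewrite forallb_forall in Hcert; specialize (Hcert W HW); cbv beta in Hcert.
  destruct (qf_neqb d (qf_det3 d U V W) (qf_int 4)) eqn:Hdet.
  { exfalso; apply (qf_neqb_val d Hd _ _ Hdet).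
    rewrite qf_det3_val, qf_val_int, EU, EV, EW by exact Hd; apply det3_rot, Hq. }
  destruct (existsb _ T) eqn:Htr.
  { apply in_map_flat_map_pm; apply existsb_exists in Htr; destruct Htr as [k [Hk Hsq]].
    exists k; split; [exact Hk |].
    apply (qf_eqb_val d) in Hsq.
    rewrite qf_val_add, qf_val_int, qf_frame_trace_val, EU, EV, EW, frame_trace_rot,
      qf_val_mul in Hsq by assumption.
    unfold qtr; lra. }
  exfalso; apply existsb_exists in Hcert; destruct Hcert as [p [Hp Hoff]].
  rewrite forallb_forall in Hoff.
  assert (Hpv : vertex (qf3_val d p)) by (apply HL, in_map, Hp).
  destruct (Hcode _ Hpv) as [c [Ec Hc]].
  apply (qf3_neqb_val d Hd _ _ (Hoff c Hc)).
  rewrite qf_frame_map_val, Ec, EU, EV, EW, <- rot_frame_map by exact Hd; reflexivity.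
Qed.

Definition sqrt2 : qf := QF 0 1.
Definition golden : qf := QF (1 # 2) (1 # 2).
Definition golden_inv : qf := QF (-1 # 2) (1 # 2).

Definition cube_codes : list qf3 := triple_codes (pm (qf_int 1)) (pm (qf_int 1)) (pm (qf_int 1)).

Definition dodec_codes : list qf3 :=
  cube_codes
  ++ triple_codes [qf_int 0] (pm golden_inv) (pm golden)
  ++ triple_codes (pm golden_inv) (pm golden) [qf_int 0]
  ++ triple_codes (pm golden) [qf_int 0] (pm golden_inv).

Definition C_trace_reps : list qf := [qf_int 2; qf_int 0; qf_int 1; sqrt2].
Definition D_trace_reps : list qf := [qf_int 2; qf_int 0; qf_int 1; golden; golden_inv].

Lemma C_trace_cert : trace_cert 2 cube_codes C_trace_reps = true.
Proof. vm_compute; reflexivity. Qed.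

Lemma D_trace_cert : trace_cert 5 dodec_codes D_trace_reps = true.
Proof. vm_compute; reflexivity. Qed.

Lemma in_map_single d k v : In v (map (qf_val d) [k]) <-> v = qf_val d k.
Proof. simpl; split; [intros [<- | []] | intros ->]; auto. Qed.

Lemma sqrt5_gt2 : 2 < sqrt 5.
Proof. rewrite <- (sqrt_Rsqr 2) by lra; apply sqrt_lt_1; unfold Rsqr; lra. Qed.

Lemma phi_eq : phi = 2 * r5.
Proof. unfold phi, r5; field. Qed.

Lemma phi_inv : / phi = 2 * s5.
Proof.
  pose proof (sqrt_sqrt 5 ltac:(lra)); pose proof sqrt5_gt2.
  unfold phi, s5; field_simplify; [| lra].
  apply (Rmult_eq_reg_r (sqrt 5 + 1)); [field_simplify; nra | lra].
Qed.

Lemma qf_val_sqrt2 : qf_val 2 sqrt2 = sqrt 2.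
Proof. unfold qf_val, sqrt2; cbn [qf_rat qf_irr]; unfold Q2R; simpl; field. Qed.

Lemma qf_val_golden : qf_val 5 golden = 2 * r5.
Proof. unfold qf_val, golden, r5; cbn [qf_rat qf_irr]; unfold Q2R; simpl; field. Qed.

Lemma qf_val_golden_inv : qf_val 5 golden_inv = 2 * s5.
Proof. unfold qf_val, golden_inv, s5; cbn [qf_rat qf_irr]; unfold Q2R; simpl; field. Qed.

Lemma cube_vertex_codes d v : cube_vertex v <-> In v (map (qf3_val d) cube_codes).
Proof.
  destruct v as [[v1 v2] v3]; unfold cube_codes.
  rewrite in_map_triple_codes, !in_map_pm, qf_val_int, Rabs_R1; reflexivity.
Qed.

Lemma dodec_vertex_codes v : dodec_vertex v <-> In v (map (qf3_val 5) dodec_codes).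
Proof.
  assert (Hphi : 0 < phi) by (unfold phi; pose proof sqrt5_gt2; lra).
  assert (Hphi_inv : 0 < / phi) by (apply Rinv_0_lt_compat, Hphi).
  destruct v as [[v1 v2] v3]; unfold dodec_codes.
  rewrite map_app, in_app_iff, <- cube_vertex_codes, !map_app, !in_app_iff,
    !in_map_triple_codes, !in_map_pm, !in_map_single, qf_val_int, qf_val_golden,
    qf_val_golden_inv, <- phi_eq, <- phi_inv, (Rabs_pos_eq phi), (Rabs_pos_eq (/ phi)) by lra.
  reflexivity.
Qed.

Lemma cube_frame_vertices : cube_vertex cube_v0 /\ cube_vertex cube_v1 /\ cube_vertex cube_v2.
Proof. repeat split; unfold Rabs; destruct Rcase_abs; lra. Qed.

Lemma Cgrp_trace q : Cgrp q -> In (qtr q) (map (qf_val 2) (flat_map pm C_trace_reps)).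
Proof.
  intros [Hq Hrot]; destruct cube_frame_vertices as [H0 [H1 H2]].
  exact (trace_cert_sound 2 _ _ cube_vertex ltac:(lia) C_trace_cert (cube_vertex_codes 2)
    H0 H1 H2 q Hq Hrot).
Qed.

Lemma Dgrp_trace q : Dgrp q -> In (qtr q) (map (qf_val 5) (flat_map pm D_trace_reps)).
Proof.
  intros [Hq Hrot]; destruct cube_frame_vertices as [H0 [H1 H2]].
  exact (trace_cert_sound 5 _ _ dodec_vertex ltac:(lia) D_trace_cert dodec_vertex_codes
    (or_introl H0) (or_introl H1) (or_introl H2) q Hq Hrot).
Qed.

Lemma qmul_inSU2 p q : inSU2 p -> inSU2 q -> inSU2 (qmul p q).
Proof.
  destruct p as [a b c d], q as [e f g h]; unfold inSU2; cbn [q0 q1 q2 q3 qmul].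
  intros Hp Hq.
  transitivity ((a^2 + b^2 + c^2 + d^2) * (e^2 + f^2 + g^2 + h^2)); [ring | rewrite Hp, Hq; ring].
Qed.

Lemma rot_qmul p q v : rot (qmul p q) v = rot p (rot q v).
Proof. destruct p, q, v as [[x y] z]; simpl; f_equal; [f_equal |]; ring. Qed.

Lemma Cgrp_qmul p q : Cgrp p -> Cgrp q -> Cgrp (qmul p q).
Proof.
  intros [Hp Rp] [Hq Rq]; split; [apply qmul_inSU2; assumption |].
  intros v Hv; rewrite rot_qmul; auto.
Qed.

Lemma Dgrp_qmul p q : Dgrp p -> Dgrp q -> Dgrp (qmul p q).
Proof.
  intros [Hp Rp] [Hq Rq]; split; [apply qmul_inSU2; assumption |].
  intros v Hv; rewrite rot_qmul; auto.
Qed.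

(* tr(A^2 B) = tr A tr(AB) - tr B, from the Cayley-Hamilton relation A^2 = (tr A) A - 1. *)
Lemma qtr_qmul_left A B : inSU2 A -> qtr (qmul A (qmul A B)) = qtr A * qtr (qmul A B) - qtr B.
Proof.
  destruct A as [a b c d], B as [e f g h]; unfold inSU2, qtr; cbn [q0 q1 q2 q3 qmul].
  intro HA.
  transitivity (2 * a * (2 * (a*e - b*f - c*g - d*h)) - 2 * e * (a^2 + b^2 + c^2 + d^2));
    [ring | rewrite HA; ring].
Qed.

Lemma qtr_qmul_right A B : inSU2 B -> qtr (qmul (qmul A B) B) = qtr B * qtr (qmul A B) - qtr A.
Proof.
  destruct A as [a b c d], B as [e f g h]; unfold inSU2, qtr; cbn [q0 q1 q2 q3 qmul].
  intro HB.
  transitivity (2 * e * (2 * (a*e - b*f - c*g - d*h)) - 2 * a * (e^2 + f^2 + g^2 + h^2));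
    [ring | rewrite HB; ring].
Qed.

Lemma qtr_qmulC A B : qtr (qmul B A) = qtr (qmul A B).
Proof. destruct A as [a b c d], B as [e f g h]; unfold qtr; cbn [q0 qmul]; ring. Qed.

(** * Pin(2) classes *)

Lemma Pin2_circle t : Pin2 (Defs.Q (cos t) 0 (sin t) 0).
Proof. exists t; left; reflexivity. Qed.

Lemma Pin2_coset t : Pin2 (Defs.Q 0 (sin t) 0 (cos t)).
Proof. exists t; right; reflexivity. Qed.

Lemma cos_acos_half x : -2 <= x <= 2 -> cos (acos (x / 2)) = x / 2.
Proof. intro Hx; apply cos_acos; lra. Qed.

(* Writing x = 2 cos a and y = 2 cos b, the equation factors as
   (z - 2 cos (a + b)) (z - 2 cos (a - b)) = 0. *)
Lemma rep_class_Pin2_circle x y z : -2 <= x <= 2 -> -2 <= y <= 2 ->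
  x ^ 2 + y ^ 2 + z ^ 2 - x * y * z = 4 -> rep_class Pin2 (x, y, z).
Proof.
  intros Hx Hy Hxyz.
  set (a := acos (x / 2)); set (b := acos (y / 2)).
  assert (ca : cos a = x / 2) by exact (cos_acos_half x Hx).
  assert (cb : cos b = y / 2) by exact (cos_acos_half y Hy).
  assert (sa : sin a ^ 2 = 1 - (x / 2) ^ 2)
    by (rewrite <- ca; pose proof (sin2_cos2 a); unfold Rsqr in *; nra).
  assert (sb : sin b ^ 2 = 1 - (y / 2) ^ 2)
    by (rewrite <- cb; pose proof (sin2_cos2 b); unfold Rsqr in *; nra).
  assert (Hroots : (z - 2 * cos (a + b)) * (z - 2 * cos (a + - b)) = 0).
  { rewrite !cos_plus, cos_neg, sin_neg, ca, cb.
    transitivity (z ^ 2 - x * y * z + x ^ 2 * y ^ 2 / 4 - 4 * sin a ^ 2 * sin b ^ 2);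
      [field | rewrite sa, sb; nra]. }
  exists (Defs.Q (cos a) 0 (sin a) 0).
  apply Rmult_integral in Hroots; destruct Hroots as [Hz | Hz];
    [exists (Defs.Q (cos b) 0 (sin b) 0) | exists (Defs.Q (cos (- b)) 0 (sin (- b)) 0)];
    rewrite cos_plus in Hz; repeat split; try apply Pin2_circle;
    unfold qtr; cbn [q0 qmul]; rewrite ?cos_neg in *; lra.
Qed.

Lemma rep_class_Pin2_axes x y z : in_E (x, y, z) ->
  (x = 0 /\ y = 0) \/ (x = 0 /\ z = 0) \/ (y = 0 /\ z = 0) -> rep_class Pin2 (x, y, z).
Proof.
  intros [Hx [Hy [Hz _]]] [[-> ->] | [[-> ->] | [-> ->]]].
  - exists (Defs.Q 0 (sin (acos (- z / 2))) 0 (cos (acos (- z / 2)))),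
      (Defs.Q 0 (sin 0) 0 (cos 0)).
    repeat split; try apply Pin2_coset; unfold qtr; cbn [q0 qmul];
      rewrite ?sin_0, ?cos_0, ?cos_acos_half by lra; lra.
  - exists (Defs.Q 0 (sin 0) 0 (cos 0)),
      (Defs.Q (cos (acos (y / 2))) 0 (sin (acos (y / 2))) 0).
    repeat split; try apply Pin2_coset; try apply Pin2_circle; unfold qtr; cbn [q0 qmul];
      rewrite ?sin_0, ?cos_0, ?cos_acos_half by lra; lra.
  - exists (Defs.Q (cos (acos (x / 2))) 0 (sin (acos (x / 2))) 0),
      (Defs.Q 0 (sin 0) 0 (cos 0)).
    repeat split; try apply Pin2_coset; try apply Pin2_circle; unfold qtr; cbn [q0 qmul];
      rewrite ?sin_0, ?cos_0, ?cos_acos_half by lra; lra.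
Qed.

(** * The finite classification *)

Definition qf_act (d : Z) (g : gen) (t : qf3) : qf3 :=
  let '(x, y, z) := t in
  match g with
  | tauX => (x, z, qf_sub (qf_mul d x z) y)
  | tauXinv => (x, qf_sub (qf_mul d x y) z, y)
  | tauY => (z, y, qf_sub (qf_mul d y z) x)
  | tauYinv => (qf_sub (qf_mul d x y) z, y, x)
  end.

Definition qf_act_word (d : Z) (w : list gen) (t : qf3) : qf3 := fold_right (qf_act d) t w.

Definition qf3_swap (t : qf3) : qf3 := let '(x, y, z) := t in (y, x, z).

Lemma qf_act_val d (Hd : (0 <= d)%Z) g c : qf3_val d (qf_act d g c) = act g (qf3_val d c).
Proof.
  destruct c as [[x y] z], g; simpl; rewrite qf_val_sub, qf_val_mul by exact Hd; reflexivity.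
Qed.

Lemma qf_act_word_val d (Hd : (0 <= d)%Z) w c :
  qf3_val d (qf_act_word d w c) = act_word w (qf3_val d c).
Proof.
  induction w as [| g w IH]; simpl; [reflexivity |].
  rewrite qf_act_val by exact Hd; f_equal; exact IH.
Qed.

Definition qf_notin (d : Z) (T : list qf) (k : qf) : bool := forallb (qf_neqb d k) T.

Definition qf3_notin (d : Z) (T : list qf) (c : qf3) : bool :=
  let '(x, y, z) := c in qf_notin d T x || qf_notin d T y || qf_notin d T z.

Fixpoint escapes (d : Z) (T : list qf) (n : nat) (c : qf3) : bool :=
  if qf3_notin d T c then true else
  match n with
  | O => false
  | S n => existsb (escapes d T n) [qf_act d tauX c; qf_act d tauY c; qf3_swap c]
  end.

Lemma qf_notin_sound d (Hd : (0 <= d)%Z) T k :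
  qf_notin d T k = true -> ~ In (qf_val d k) (map (qf_val d) T).
Proof.
  intros Hk Hin; apply in_map_iff in Hin; destruct Hin as [k' [E Hk']].
  unfold qf_notin in Hk; rewrite forallb_forall in Hk.
  exact (qf_neqb_val d Hd _ _ (Hk k' Hk') (eq_sym E)).
Qed.

Section RepClassSearch.

Variable G : quat -> Prop.
Hypothesis G_qmul : forall p q, G p -> G q -> G (qmul p q).
Hypothesis G_inSU2 : forall p, G p -> inSU2 p.

Lemma rep_class_tauX t : rep_class G t -> rep_class G (act tauX t).
Proof.
  destruct t as [[x y] z]; intros [A [B [HA [HB [<- [<- <-]]]]]].
  exists A, (qmul A B); repeat split; auto; rewrite qtr_qmul_left; auto.
Qed.

Lemma rep_class_tauY t : rep_class G t -> rep_class G (act tauY t).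
Proof.
  destruct t as [[x y] z]; intros [A [B [HA [HB [<- [<- <-]]]]]].
  exists (qmul A B), B; repeat split; auto; rewrite qtr_qmul_right; auto.
Qed.

Lemma rep_class_swap x y z : rep_class G (x, y, z) -> rep_class G (y, x, z).
Proof.
  intros [A [B [HA [HB [Ex [Ey Ez]]]]]].
  exists B, A; repeat split; auto; rewrite qtr_qmulC; assumption.
Qed.

Variables (d : Z) (T : list qf).
Hypothesis d_ge0 : (0 <= d)%Z.
Hypothesis G_trace : forall q, G q -> In (qtr q) (map (qf_val d) T).

Lemma rep_class_traces x y z : rep_class G (x, y, z) ->
  In x (map (qf_val d) T) /\ In y (map (qf_val d) T) /\ In z (map (qf_val d) T).
Proof.
  intros [A [B [HA [HB [<- [<- <-]]]]]].
  split; [| split]; apply G_trace; [| | apply G_qmul]; assumption.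
Qed.

Lemma qf3_notin_sound c : qf3_notin d T c = true -> ~ rep_class G (qf3_val d c).
Proof.
  destruct c as [[x y] z]; simpl; intros Hout Hrep.
  destruct (rep_class_traces _ _ _ Hrep) as [Hx [Hy Hz]].
  rewrite !orb_true_iff in Hout; destruct Hout as [[Hout | Hout] | Hout];
    eapply qf_notin_sound; eauto.
Qed.

Lemma escapes_sound n c : escapes d T n c = true -> ~ rep_class G (qf3_val d c).
Proof.
  revert c; induction n as [| n IH]; intros c Hesc; simpl in Hesc;
    destruct (qf3_notin d T c) eqn:Hout; try (apply qf3_notin_sound, Hout); try discriminate.
  rewrite !orb_true_iff in Hesc; intro Hrep.
  destruct Hesc as [HX | [HY | [Hswap | Hfalse]]]; try discriminate.
  - apply (IH _ HX); rewrite qf_act_val by exact d_ge0; apply rep_class_tauX, Hrep.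
  - apply (IH _ HY); rewrite qf_act_val by exact d_ge0; apply rep_class_tauY, Hrep.
  - apply (IH _ Hswap); destruct c as [[x y] z]; apply rep_class_swap, Hrep.
Qed.

End RepClassSearch.

Section Pin2Test.

Variable d : Z.
Hypothesis d_ge0 : (0 <= d)%Z.

Local Infix "+" := qf_add.
Local Infix "*" := (qf_mul d).

Definition qf_is0 (k : qf) : bool := qf_eqb k (qf_int 0).

Definition pin2_test (c : qf3) : bool :=
  let '(x, y, z) := c in
     qf_eqb (qf_sub (x * x + y * y + z * z) (x * y * z)) (qf_int 4)
  || qf_is0 x && qf_is0 y || qf_is0 x && qf_is0 z || qf_is0 y && qf_is0 z.

Lemma qf_is0_val k : qf_is0 k = true -> qf_val d k = 0.
Proof. intro Hk; apply (qf_eqb_val d) in Hk; rewrite qf_val_int in Hk; exact Hk. Qed.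

Lemma pin2_test_sound c : in_E (qf3_val d c) -> pin2_test c = true ->
  rep_class Pin2 (qf3_val d c).
Proof.
  destruct c as [[x y] z]; unfold pin2_test; cbn [qf3_val]; intros HE Htest.
  rewrite !orb_true_iff, !andb_true_iff in Htest.
  destruct Htest as [[[Hkappa | [Hx Hy]] | [Hx Hz]] | [Hy Hz]].
  - destruct HE as [Hx [Hy _]]; apply rep_class_Pin2_circle; try assumption.
    apply (qf_eqb_val d) in Hkappa.
    rewrite qf_val_sub, !qf_val_add, !qf_val_mul, qf_val_int in Hkappa by exact d_ge0.
    rewrite <- Hkappa; ring.
  - apply rep_class_Pin2_axes; [exact HE |]; left; split; apply qf_is0_val; assumption.
  - apply rep_class_Pin2_axes; [exact HE |]; right; left; split; apply qf_is0_val; assumption.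
  - apply rep_class_Pin2_axes; [exact HE |]; right; right; split; apply qf_is0_val; assumption.
Qed.

End Pin2Test.

Definition qf_permute (s : perm3) (t : qf3) : qf3 :=
  let '(x, y, z) := t in
  match s with
  | p123 => (x, y, z) | p132 => (x, z, y) | p213 => (y, x, z)
  | p231 => (y, z, x) | p312 => (z, x, y) | p321 => (z, y, x)
  end.

Lemma qf_permute_val d s c : qf3_val d (qf_permute s c) = permute s (qf3_val d c).
Proof. destruct c as [[x y] z], s; reflexivity. Qed.

Definition qf3_scale (d : Z) (e : Z * Z * Z) (t : qf3) : qf3 :=
  let '(e1, e2, e3) := e in let '(x, y, z) := t in
  (qf_mul d (qf_int e1) x, qf_mul d (qf_int e2) y, qf_mul d (qf_int e3) z).

Definition even_signs : list (Z * Z * Z) := [(1, 1, 1); (1, -1, -1); (-1, 1, -1); (-1, -1, 1)]%Z.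

Definition all_perm3 : list perm3 := [p123; p132; p213; p231; p312; p321].

Definition short_words : list (list gen) := [[]; [tauX]; [tauXinv]; [tauY]; [tauYinv]].

Definition reaches_special (d : Z) (spec : list qf3) (c : qf3) : bool :=
  existsb (fun w => existsb (fun s => existsb (fun e =>
      existsb (fun sp => qf3_eqb sp (qf3_scale d e (qf_permute s (qf_act_word d w c)))) spec)
    even_signs) all_perm3) short_words.

Lemma reaches_special_sound d (Hd : (0 <= d)%Z) spec c : reaches_special d spec c = true ->
  exists w sp, In sp spec /\ S_equiv (act_word w (qf3_val d c)) (qf3_val d sp).
Proof.
  unfold reaches_special; intro H.
  apply existsb_exists in H; destruct H as [w [_ H]].
  apply existsb_exists in H; destruct H as [s [_ H]].
  apply existsb_exists in H; destruct H as [[[e1 e2] e3] [He H]].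
  apply existsb_exists in H; destruct H as [sp [Hsp H]].
  exists w, sp; split; [exact Hsp |].
  apply (qf3_eqb_val d) in H; rewrite H.
  exists s, (IZR e1), (IZR e2), (IZR e3).
  rewrite <- qf_act_word_val, <- qf_permute_val by exact Hd.
  destruct (qf_permute s (qf_act_word d w c)) as [[x y] z].
  simpl in He; repeat destruct He as [He | He]; try contradiction; injection He as <- <- <-;
    (repeat split; [lra .. | simpl; rewrite !qf_val_mul, !qf_val_int by exact Hd; reflexivity]).
Qed.

Definition classify (d : Z) (T : list qf) (spec : list qf3) : bool :=
  forallb (fun c =>
    if escapes d T 4 c then true else if pin2_test d c then true else reaches_special d spec c)
    (triple_codes T T T).

Lemma special_triple_of_classify (G : quat -> Prop) d T spec :
  (0 <= d)%Z ->
  (forall p q, G p -> G q -> G (qmul p q)) ->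
  (forall p, G p -> inSU2 p) ->
  (forall q, G q -> In (qtr q) (map (qf_val d) T)) ->
  classify d T spec = true ->
  (forall sp, In sp spec -> In (qf3_val d sp) special_triples) ->
  forall x y z, in_E (x, y, z) -> rep_class G (x, y, z) -> ~ rep_class Pin2 (x, y, z) ->
  exists (w : list gen) (t : R * R * R),
    In t special_triples /\ S_equiv (act_word w (x, y, z)) t.
Proof.
  intros Hd G_qmul G_inSU2 G_trace Hclass Hspec x y z HE HG HPin2.
  assert (Hxyz : In (x, y, z) (map (qf3_val d) (triple_codes T T T)))
    by (apply in_map_triple_codes, (rep_class_traces G G_qmul d T G_trace), HG).
  apply in_map_iff in Hxyz; destruct Hxyz as [c [Ec Hc]]; rewrite <- Ec in *.
  unfold classify in Hclass; rewrite forallb_forall in Hclass.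
  specialize (Hclass c Hc); cbv beta in Hclass.
  destruct (escapes d T 4 c) eqn:Hesc.
  { exfalso; exact (escapes_sound G G_qmul G_inSU2 d T Hd G_trace 4 c Hesc HG). }
  destruct (pin2_test d c) eqn:Hpin2.
  { exfalso; exact (HPin2 (pin2_test_sound d Hd c HE Hpin2)). }
  destruct (reaches_special_sound d Hd spec c Hclass) as [w [sp [Hsp Hequiv]]].
  exists w, (qf3_val d sp); split; [apply Hspec |]; assumption.
Qed.

Definition C_special : list qf3 := [(sqrt2, qf_int 1, sqrt2); (qf_int 1, qf_int 1, qf_int 1)].

Definition D_special : list qf3 :=
  let one := qf_int 1 in
  [(one, one, one); (qf_opp golden_inv, golden_inv, golden_inv);
   (qf_opp golden_inv, qf_opp golden_inv, one); (golden, qf_opp golden, qf_opp golden);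
   (golden, one, golden); (one, golden, one); (one, golden_inv, qf_opp one);
   (one, golden, golden_inv)].

Ltac solve_special :=
  unfold special_triples, r5, s5; simpl;
  repeat first [left; rewrite !pair_equal_spec; lra | right].

Lemma C_special_val sp : In sp C_special -> In (qf3_val 2 sp) special_triples.
Proof.
  intro Hsp; repeat destruct Hsp as [<- | Hsp]; try contradiction; simpl;
    rewrite ?qf_val_int, ?qf_val_sqrt2; solve_special.
Qed.

Lemma D_special_val sp : In sp D_special -> In (qf3_val 5 sp) special_triples.
Proof.
  intro Hsp; repeat destruct Hsp as [<- | Hsp]; try contradiction; simpl;
    rewrite ?qf_val_opp, ?qf_val_int, ?qf_val_golden, ?qf_val_golden_inv;
    solve_special.
Qed.

Lemma C_classify : classify 2 (flat_map pm C_trace_reps) C_special = true.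
Proof. vm_compute; reflexivity. Qed.

Lemma D_classify : classify 5 (flat_map pm D_trace_reps) D_special = true.
Proof. vm_compute; reflexivity. Qed.

Theorem mainTheorem11 (x y z : R) :
  in_E (x, y, z) ->
  (rep_class Cgrp (x, y, z) \/ rep_class Dgrp (x, y, z)) ->
  ~ rep_class Pin2 (x, y, z) ->
  exists (w : list gen) (t : R * R * R),
    In t special_triples /\ S_equiv (act_word w (x, y, z)) t.
Proof.
  intros HE [HC | HD] HPin2.
  - exact (special_triple_of_classify Cgrp 2 _ C_special ltac:(lia) Cgrp_qmul
      (fun p Hp => proj1 Hp) Cgrp_trace C_classify C_special_val x y z HE HC HPin2).
  - exact (special_triple_of_classify Dgrp 5 _ D_special ltac:(lia) Dgrp_qmul
      (fun p Hp => proj1 Hp) Dgrp_trace D_classify D_special_val x y z HE HD HPin2).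
Qed.
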